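(* Let $i,h$ be receivers with $\psi_i>\psi_h\ge 1$ and $\varrho_i<\varrho_h$. Then $\mathbb E[\Delta_h]>\mathbb E[\Delta_i]$, where $\mathbb E[\Delta_r]$ denotes the expected primary degree of a vertex induced by receiver $r$.
   Context: A sender holds a frame $\mathcal N$ of $N\ge2$ packets and serves receivers $\mathcal M=\{1,\dots,M\}$. For each receiver $r$ there are sets $\mathcal H_r\subseteq\mathcal N$ (Has set), $\mathcal L_r=\mathcal N\setminus\mathcal H_r$ (Lacks set) and $\mathcal W_r\subseteq\mathcal L_r$ (Wants set), with cardinalities $\varrho_r=|\mathcal H_r|$, $\varphi_r=N-\varrho_r$, $\psi_r=|\mathcal W_r|$. The primary IDNC graph $\mathcal G_\rho$ has a vertex $v_{rj}$ for every receiver $r$ and every $j\in\mathcal W_r$; two distinct vertices $v_{rj},v_{kl}$ are adjacent iff (C1) $j=l$, or (C2) $j\in\mathcal H_k$ and $l\in\mathcal H_r$. The primary degree of a vertex is its degree in $\mathcal G_\rho$. Expectations are taken in the model that ignores set contents: given the cardinalities, the pairs $(\mathcal H_k,\mathcal W_k)$, $k\in\mathcal M$, are independent, $\mathcal H_k$ is a uniformly random $\varrho_k$-element subset of $\mathcal N$, and given $\mathcal H_k$, $\mathcal W_k$ is a uniformly random $\psi_k$-element subset of $\mathcal N\setminus\mathcal H_k$. For a receiver $r$ with $\psi_r\ge1$, $\mathbb E[\Delta_r]$ is the expected primary degree of $v_{rj}$ conditioned on $j\in\mathcal W_r$ (independent of the packet $j$). *)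

From mathcomp Require Import all_boot all_order all_algebra.
Set Implicit Arguments. Unset Strict Implicit. Unset Printing Implicit Defensive.
Import GRing.Theory Num.Theory.

Notation config N M := {ffun 'I_M -> {set 'I_N} * {set 'I_N}}.

Definition Has N M (c : config N M) (k : 'I_M) : {set 'I_N} := (c k).1.
Definition Lacks N M (c : config N M) (k : 'I_M) : {set 'I_N} := ~: Has c k.
Definition Wants N M (c : config N M) (k : 'I_M) : {set 'I_N} := (c k).2.

Definition valid_config N M (rho psi : 'I_M -> nat) (c : config N M) : bool :=
  [forall k, [&& #|Has c k| == rho k, Wants c k \subset Lacks c k
             & #|Wants c k| == psi k]].

(* Vertices of the primary IDNC graph: v_{kl} for l in W_k. *)
Definition is_vertex N M (c : config N M) (v : 'I_M * 'I_N) : bool :=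
  v.2 \in Wants c v.1.

Definition adjacent N M (c : config N M) (u v : 'I_M * 'I_N) : bool :=
  [&& u != v, is_vertex c u, is_vertex c v &
      (u.2 == v.2) || ((u.2 \in Has c v.1) && (v.2 \in Has c u.1))].

Definition primary_degree N M (c : config N M) (v : 'I_M * 'I_N) : nat :=
  #|[set w | adjacent c v w]|.

(* Expected primary degree of v_{rj} conditioned on j in W_r, in the model where the
   (H_k, W_k) are independent, H_k uniform rho_k-subset, W_k uniform psi_k-subset of
   the complement.  This model is exactly the uniform distribution on valid
   configurations (each receiver has the same number of admissible pairs). *)
Definition expected_degree N M (rho psi : 'I_M -> nat) (r : 'I_M) (j : 'I_N) : rat :=
  let S := [set c : config N M | valid_config rho psi c && (j \in Wants c r)] in
  ((\sum_(c in S) (primary_degree c (r, j))%:R) / (#|S|)%:R)%R.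

(* Conditioned on j in W_r, the configuration space is a product of the
   per-receiver sample spaces, uniform on each factor.  A vertex v_kl with
   k <> r is adjacent to v_rj iff l = j is wanted by k, or j in H_k and l
   lies in both W_k and H_r; so the expected degree is a sum over k <> r of
   products of means over single factors.  Each factor is invariant under
   the permutations of the frame, which gives P(j in W_k) = psi_k/N and, for
   l <> j, P(l in H_r | j in W_r) = rho_r/(N-1) and
   P(j in H_k, l in W_k) = rho_k psi_k/(N(N-1)).  Hence
     E[Delta_r] = sum_(k <> r) (psi_k/N + rho_r rho_k psi_k/(N(N-1))),
   and E[Delta_h] > E[Delta_i] follows by comparing the two sums term by term. *)

From mathcomp Require Import all_boot all_order all_algebra all_fingroup.
From mathcomp Require Import ring.
Set Implicit Arguments. Unset Strict Implicit. Unset Printing Implicit Defensive.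
Import GRing.Theory Num.Theory.

Local Notation pairT N := ({set 'I_N} * {set 'I_N})%type.

Lemma exists_subset_card (T : finType) (B : {set T}) k :
  k <= #|B| -> exists2 A : {set T}, A \subset B & #|A| = k.
Proof.
rewrite -bin_gt0 -cards_draws => /card_gt0P [A]; rewrite inE => /andP [AB /eqP cardA].
by exists A.
Qed.

Lemma sum_predI_mul (T : finType) (A B : pred T) (F : T -> nat) :
  \sum_(x in [pred x | A x && B x]) F x = \sum_(x in A) B x * F x.
Proof.
rewrite big_mkcond [RHS]big_mkcond; apply: eq_bigr => x _.
by rewrite !unfold_in /=; case: (A x); case: (B x); rewrite ?mul1n.
Qed.

Lemma card_predI_sum (T : finType) (A B : pred T) :
  #|[pred x | A x && B x]| = \sum_(x in A) B x.
Proof. by rewrite -sum1_card sum_predI_mul; apply: eq_bigr => x _; rewrite muln1. Qed.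

Lemma sum_family_mul2 (aT rT : finType) (F : aT -> pred rT) r k (u v : rT -> nat) :
  r != k ->
  \sum_(c in family F) u (c r) * v (c k) =
    (\sum_(p in F r) u p) * (\sum_(q in F k) v q) * \prod_(x | (x != r) && (x != k)) #|F x|.
Proof.
move=> rk; pose w x p := if x == r then u p else if x == k then v p else 1.
have : \prod_x \sum_(p | F x p) w x p = \sum_(c in family F) \prod_x w x (c x).
  exact: bigA_distr_big_dep.
rewrite (bigD1 r) // (bigD1 k) /=; last by rewrite eq_sym.
rewrite /w eqxx eq_sym (negbTE rk) eqxx mulnA.
rewrite (eq_bigr (fun x => #|F x|)) => [->|x /andP [xr xk]]; last first.
  by rewrite (negbTE xr) (negbTE xk) sum1_card.
apply: eq_bigr => c _; rewrite (bigD1 r) // (bigD1 k) /=; last by rewrite eq_sym.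
rewrite eqxx eq_sym (negbTE rk) eqxx big1 ?muln1 ?mulnA // => x /andP [xr xk].
by rewrite (negbTE xr) (negbTE xk).
Qed.

Section Mean.
Variable T : finType.
Local Open Scope ring_scope.

Definition mean (A : pred T) (f : T -> nat) : rat := (\sum_(x in A) f x)%:R / #|A|%:R.

Lemma eq_mean_in A f g : {in A, f =1 g} -> mean A f = mean A g.
Proof. by move=> fg; rewrite /mean (eq_bigr _ fg). Qed.

Lemma eq_mean_pred A B f : A =i B -> mean A f = mean B f.
Proof. by move=> AB; rewrite /mean (eq_bigl _ _ AB) (eq_card AB). Qed.

Lemma mean_add A f g : mean A (fun x => f x + g x)%N = mean A f + mean A g.
Proof. by rewrite /mean big_split natrD mulrDl. Qed.

Lemma mean_sum (I : Type) (s : seq I) (P : pred I) A (F : I -> T -> nat) :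
  mean A (fun x => \sum_(i <- s | P i) F i x)%N = \sum_(i <- s | P i) mean A (F i).
Proof. by rewrite /mean exchange_big natr_sum mulr_suml. Qed.

Lemma mean_cst A n : (0 < #|A|)%N -> mean A (fun _ => n) = n%:R.
Proof.
move=> A_gt0; rewrite /mean sum_nat_const natrM mulrAC divff ?mul1r //.
by rewrite pnatr_eq0 -lt0n.
Qed.

Lemma mean_frac A f n d :
  (0 < #|A|)%N -> (0 < d)%N -> (d * \sum_(x in A) f x = n * #|A|)%N ->
  mean A f = n%:R / d%:R.
Proof.
move=> A_gt0 d_gt0 /(congr1 (fun m => m%:R : rat)); rewrite !natrM => e.
rewrite /mean; apply/eqP; rewrite eqr_div ?pnatr_eq0 -?lt0n //.
by rewrite mulrC e mulrC.
Qed.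

End Mean.

Section MeanFamily.
Variables aT T : finType.
Local Open Scope ring_scope.

Lemma mean_family_mul (F : aT -> pred T) r k (u v : T -> nat) :
  r != k -> (forall x, 0 < #|F x|)%N ->
  mean (family F) (fun c => u (c r) * v (c k))%N = mean (F r) u * mean (F k) v.
Proof.
move=> rk F_gt0.
have card_family : #|family F| = (#|F r| * #|F k| * \prod_(x | (x != r) && (x != k)) #|F x|)%N.
  have := sum_family_mul2 F (fun _ => 1%N) (fun _ => 1%N) rk.
  by rewrite !sum1_card => <-; rewrite -sum1_card.
rewrite /mean sum_family_mul2 // card_family !natrM -mulf_div divff ?mulr1 ?mulf_div //.
by rewrite pnatr_eq0 -lt0n prodn_gt0.
Qed.

Lemma mean_family_proj (F : aT -> pred T) r k (v : T -> nat) :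
  r != k -> (forall x, 0 < #|F x|)%N ->
  mean (family F) (fun c => v (c k)) = mean (F k) v.
Proof.
move=> rk F_gt0; rewrite -(mul1r (mean _ v)) -[1](mean_cst 1 (F_gt0 r)).
by rewrite -mean_family_mul //; apply: eq_mean_in => c _; rewrite mul1n.
Qed.

End MeanFamily.

Section AdmissiblePairs.
Variable N : nat.

Definition admissible (a b : nat) (p : pairT N) : bool :=
  [&& #|p.1| == a, p.2 \subset ~: p.1 & #|p.2| == b].

Definition pair_imset (t : 'I_N -> 'I_N) (p : pairT N) : pairT N :=
  (t @: p.1, t @: p.2).

Definition equivariant (f : pairT N -> {set 'I_N}) : Prop :=
  forall t p, f (pair_imset t p) = t @: f p.

Lemma equivariant_fst : equivariant fst. Proof. by []. Qed.
Lemma equivariant_snd : equivariant snd. Proof. by []. Qed.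

Lemma admissible_card_fst a b : {in admissible a b, forall p : pairT N, #|p.1| = a}.
Proof. by move=> p /and3P [/eqP]. Qed.

Lemma admissible_card_snd a b : {in admissible a b, forall p : pairT N, #|p.2| = b}.
Proof. by move=> p /and3P [_ _ /eqP]. Qed.

Lemma admissible_disjoint a b : {in admissible a b, forall p : pairT N, [disjoint p.1 & p.2]}.
Proof. by move=> p /and3P [_ sub21 _]; rewrite disjoint_sym disjoints_subset. Qed.

Lemma ord_gt0 (j : 'I_N) : 0 < N.
Proof. exact: leq_ltn_trans (leq0n j) (ltn_ord j). Qed.

Lemma ord_neq_predn_gt0 (j l : 'I_N) : l != j -> 0 < N.-1.
Proof.
by move=> lj; have := cardsC1 j; rewrite card_ord => <-; apply/card_gt0P; exists l; rewrite !inE.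
Qed.

Lemma pair_imsetK t : involutive t -> involutive (pair_imset t).
Proof.
move=> tK [A B]; rewrite /pair_imset /= -!imset_comp.
by rewrite !(eq_imset _ tK) !imset_id.
Qed.

Lemma admissible_imset a b t p :
  involutive t -> admissible a b (pair_imset t p) = admissible a b p.
Proof.
move=> tK; have t_inj := inv_inj tK.
rewrite /admissible /pair_imset /= !card_imset //; congr [&& _, _ & _].
apply/subsetP/subsetP => sub x.
- by move=> xB; have := sub (t x) (imset_f _ xB); rewrite !inE mem_imset.
- by case/imsetP => y yB ->; have := sub y yB; rewrite !inE mem_imset.
Qed.

Lemma sum_pair_imset (A : pred (pairT N)) t (F : pairT N -> nat) :
  involutive t -> (forall p, A (pair_imset t p) = A p) ->
  \sum_(p in A) F p = \sum_(p in A) F (pair_imset t p).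
Proof.
move=> tK At; rewrite (reindex_inj (inv_inj (pair_imsetK tK))) /=.
by apply: eq_bigl => p; rewrite !unfold_in At.
Qed.

Lemma sum_mem_card (A : pred (pairT N)) (g : pairT N -> {set 'I_N}) :
  \sum_(l : 'I_N) \sum_(p in A) (l \in g p) = \sum_(p in A) #|g p|.
Proof.
rewrite exchange_big; apply: eq_bigr => p _.
by rewrite -sum1_card [RHS]big_mkcond; apply: eq_bigr => l _; case: (l \in g p).
Qed.

(* Transpositions inside L preserve A, so all l in L lie in equally many g p;
   summing over l counts every p in A exactly n times. *)
Lemma card_mem_uniform (A : pred (pairT N)) (g : pairT N -> {set 'I_N})
    (L : {set 'I_N}) n l :
  equivariant g ->
  {in L &, forall x y p, A (pair_imset (tperm x y) p) = A p} ->
  {in A, forall p, g p \subset L /\ #|g p| = n} -> l \in L ->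
  #|L| * \sum_(p in A) (l \in g p) = n * #|A|.
Proof.
move=> gE AL gA lL.
have same x : x \in L -> \sum_(p in A) (x \in g p) = \sum_(p in A) (l \in g p).
  move=> xL; rewrite (sum_pair_imset _ (tpermK x l) (AL x l xL lL)).
  apply: eq_bigr => p _; rewrite gE -{1}(tpermR x l).
  by rewrite mem_imset //; apply: inv_inj (tpermK x l).
have outside x : x \notin L -> \sum_(p in A) (x \in g p) = 0.
  move=> xL; rewrite big1 // => p /gA [gL _].
  by apply/eqP; rewrite eqb0; apply: contra xL; apply/subsetP.
have sum_card : \sum_(p in A) #|g p| = n * #|A|.
  by rewrite mulnC -sum_nat_const; apply: eq_bigr => p /gA [].
have := sum_mem_card A g; rewrite sum_card => <-.
rewrite (bigID (mem L)) /= [X in _ = _ + X]big1 ?addn0; last by move=> x; apply: outside.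
by rewrite (eq_bigr _ same) sum_nat_const.
Qed.

Lemma card_admissible_gt0 a b : a + b <= N -> 0 < #|admissible a b|.
Proof.
move=> abN; have aN : a <= N by apply: leq_trans abN; apply: leq_addr.
have [H _ cardH] : exists2 H : {set 'I_N}, H \subset [set: 'I_N] & #|H| = a.
  by apply: exists_subset_card; rewrite cardsT card_ord.
have [W WH cardW] : exists2 W : {set 'I_N}, W \subset ~: H & #|W| = b.
  by apply: exists_subset_card; rewrite cardsCs setCK card_ord cardH leq_subRL.
by apply/card_gt0P; exists (H, W); rewrite unfold_in /admissible /= WH cardH cardW !eqxx.
Qed.

Lemma card_admissible_mem a b f n j :
  equivariant f -> {in admissible a b, forall p, #|f p| = n} ->
  N * \sum_(p in admissible a b) (j \in f p) = n * #|admissible a b|.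
Proof.
move=> fE fn; have := @card_mem_uniform (admissible a b) f setT n j fE.
rewrite cardsT card_ord; apply=> // [x y _ _ p | p /fn ->].
  exact/admissible_imset/tpermK.
by rewrite subsetT.
Qed.

Lemma card_admissible_mem_cond a b f g n j l :
  equivariant f -> equivariant g ->
  {in admissible a b, forall p, #|g p| = n /\ [disjoint f p & g p]} -> l != j ->
  N.-1 * \sum_(p in [pred p | admissible a b p && (j \in f p)]) (l \in g p) =
    n * #|[pred p | admissible a b p && (j \in f p)]|.
Proof.
move=> fE gE fg lj.
have := @card_mem_uniform [pred p | admissible a b p && (j \in f p)] g [set~ j] n l gE.
rewrite cardsC1 card_ord; apply; rewrite ?inE //.
  move=> x y; rewrite !inE => xj yj p /=; rewrite admissible_imset ?fE; last exact: tpermK.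
  by rewrite -{1}(tpermD xj yj) mem_imset //; apply: inv_inj (tpermK x y).
move=> p; rewrite inE => /andP [/fg [gn dis] jf]; split=> //.
by apply/subsetP => x xg; rewrite !inE; apply: contraTneq xg => ->; rewrite (disjointFr dis).
Qed.

Lemma card_admissible_mem_gt0 a b f m j :
  a + b <= N -> 0 < m -> equivariant f -> {in admissible a b, forall p, #|f p| = m} ->
  0 < #|[pred p | admissible a b p && (j \in f p)]|.
Proof.
move=> abN m_gt0 fE fm.
rewrite card_predI_sum -(ltn_pmul2l (ord_gt0 j)) muln0.
by rewrite (card_admissible_mem _ fE fm) muln_gt0 m_gt0 card_admissible_gt0.
Qed.


Local Open Scope ring_scope.

Lemma mean_admissible_mem a b f n j :
  (a + b <= N)%N -> equivariant f -> {in admissible a b, forall p, #|f p| = n} ->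
  mean (admissible a b) (fun p => j \in f p) = n%:R / N%:R.
Proof.
move=> abN fE fn; apply: mean_frac; rewrite ?card_admissible_gt0 ?(ord_gt0 j) //.
exact: card_admissible_mem.
Qed.

Lemma mean_admissible_cond a b f g m n j l :
  (a + b <= N)%N -> (0 < m)%N -> l != j -> equivariant f -> equivariant g ->
  {in admissible a b, forall p, #|f p| = m} ->
  {in admissible a b, forall p, #|g p| = n /\ [disjoint f p & g p]} ->
  mean [pred p | admissible a b p && (j \in f p)] (fun p => l \in g p) = n%:R / N.-1%:R.
Proof.
move=> abN m_gt0 lj fE gE fm gn; apply: mean_frac.
- exact: card_admissible_mem_gt0 fm.
- exact: ord_neq_predn_gt0 lj.
- exact: card_admissible_mem_cond.
Qed.

Lemma mean_admissible_mem2 a b f g m n j l :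
  (a + b <= N)%N -> l != j -> equivariant f -> equivariant g ->
  {in admissible a b, forall p, #|f p| = m} ->
  {in admissible a b, forall p, #|g p| = n /\ [disjoint f p & g p]} ->
  mean (admissible a b) (fun p => (j \in f p) * (l \in g p))%N = (m * n)%:R / (N * N.-1)%:R.
Proof.
move=> abN lj fE gE fm gn; apply: mean_frac; rewrite ?card_admissible_gt0 //.
  by rewrite muln_gt0 (ord_gt0 j) (ord_neq_predn_gt0 lj).
rewrite -(sum_predI_mul (admissible a b) (fun p => j \in f p)) -mulnA.
rewrite (card_admissible_mem_cond fE gE gn lj) card_predI_sum mulnCA.
by rewrite (card_admissible_mem _ fE fm) mulnA [(n * m)%N]mulnC.
Qed.

End AdmissiblePairs.

Arguments equivariant_fst {N}.
Arguments equivariant_snd {N}.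

Section PrimaryDegree.
Variables (N M : nat) (c : config N M) (r : 'I_M) (j : 'I_N).
Hypotheses (wants_lacks : forall k, Wants c k \subset Lacks c k) (j_wanted : j \in Wants c r).

Lemma adjacentE k l :
  adjacent c (r, j) (k, l) =
    [&& k != r, l \in Wants c k & (l == j) || (j \in Has c k) && (l \in Has c r)].
Proof.
have j_lacked : j \notin Has c r by have := subsetP (wants_lacks r) j j_wanted; rewrite inE.
rewrite /adjacent /is_vertex /= j_wanted /=.
have [-> | kr] := eqVneq k r; last first.
  by rewrite xpair_eqE [r == k]eq_sym (negbTE kr) [j == l]eq_sym.
by rewrite xpair_eqE eqxx (negbTE j_lacked) /= orbF; case: (j == l); rewrite ?andbF.
Qed.

Lemma primary_degreeE :
  primary_degree c (r, j) = \sum_(k | k != r)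
    ((j \in Wants c k) + \sum_l (l \in Has c r) * ((j \in Has c k) * (l \in Wants c k))).
Proof.
have j_lacked : j \notin Has c r by have := subsetP (wants_lacks r) j j_wanted; rewrite inE.
transitivity (\sum_k \sum_l (adjacent c (r, j) (k, l) : nat)).
  rewrite /primary_degree -sum1_card big_mkcond pair_bigA /=.
  by apply: eq_bigr => -[k l] _; rewrite inE; case: adjacent.
rewrite (bigD1 r) //= big1 ?add0n => [|l _]; last by rewrite adjacentE eqxx.
apply: eq_bigr => k kr.
rewrite (bigD1 j) //= [X in _ = _ + X](bigD1 j) //= (negbTE j_lacked) add0n.
rewrite adjacentE kr eqxx andbT; congr (_ + _); apply: eq_bigr => l lj.
rewrite adjacentE kr (negbTE lj) !mulnb /=.
by congr (nat_of_bool _); apply/and3P/and3P => -[? ? ?].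
Qed.

End PrimaryDegree.

Definition receiver_pairs N M (rho psi : 'I_M -> nat) (r : 'I_M) (j : 'I_N)
    (x : 'I_M) : pred (pairT N) :=
  [pred p | admissible (rho x) (psi x) p && ((x == r) ==> (j \in p.2))].

Section ExpectedDegree.
Variables (N M : nat) (rho psi : 'I_M -> nat) (r : 'I_M) (j : 'I_N).
Local Notation F := (receiver_pairs rho psi r j).

Lemma mem_valid_configs :
  [set c : config N M | valid_config rho psi c && (j \in Wants c r)] =i family F.
Proof.
move=> c; rewrite inE; apply/andP/familyP => [[/forallP valid jr] x | inF].
  rewrite inE /=; apply/andP; split; first exact: valid.
  by apply/implyP => /eqP ->.
split; first by apply/forallP => x; have := inF x; rewrite inE => /andP [].
by have := inF r; rewrite inE eqxx => /andP [].
Qed.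

Lemma expected_degree_mean :
  expected_degree rho psi r j = mean (family F) (fun c => primary_degree c (r, j)).
Proof.
rewrite /expected_degree /mean /=.
by rewrite -natr_sum (eq_bigl _ _ mem_valid_configs) (eq_card mem_valid_configs).
Qed.

Lemma receiver_pairs_config c :
  c \in family F -> (forall k, Wants c k \subset Lacks c k) /\ j \in Wants c r.
Proof.
rewrite -mem_valid_configs inE => /andP [/forallP valid jr]; split=> // k.
by case/and3P: (valid k).
Qed.

Hypotheses (N_gt1 : 1 < N) (fits : forall k, rho k + psi k <= N) (psi_r_gt0 : 0 < psi r).

Lemma receiver_pairsE k : k != r -> F k =i admissible (rho k) (psi k).
Proof. by move=> kr p; rewrite !unfold_in /= (negbTE kr) andbT. Qed.

Lemma receiver_pairs_self : F r =i [pred p | admissible (rho r) (psi r) p && (j \in p.2)].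
Proof. by move=> p; rewrite !unfold_in /= eqxx. Qed.

Lemma card_receiver_pairs_gt0 x : 0 < #|F x|.
Proof.
have [->|xr] := eqVneq x r.
  rewrite (eq_card receiver_pairs_self) (card_admissible_mem_gt0 _ (fits r) psi_r_gt0) //.
  exact: admissible_card_snd.
by rewrite (eq_card (receiver_pairsE xr)) card_admissible_gt0.
Qed.

Local Open Scope ring_scope.

Lemma mean_degree_term k : k != r ->
  mean (family F) (fun c =>
    (j \in Wants c k) + \sum_l (l \in Has c r) * ((j \in Has c k) * (l \in Wants c k)))%N =
  (psi k)%:R / N%:R + (rho r * rho k * psi k)%:R / (N * N.-1)%:R.
Proof.
move=> kr; have rk : r != k by rewrite eq_sym.
rewrite mean_add mean_sum.
rewrite (mean_family_proj (fun q : pairT N => j \in q.2) rk card_receiver_pairs_gt0).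
rewrite (eq_mean_pred _ (receiver_pairsE kr)).
have mean_j_has_r : mean (F r) (fun p => j \in p.1) = 0.
  rewrite (eq_mean_in (g := fun=> 0%N)) ?mean_cst ?card_receiver_pairs_gt0 // => p.
  rewrite receiver_pairs_self unfold_in => /andP [/admissible_disjoint dis jp].
  by rewrite (disjointFl dis jp).
have mean_l_has_r l : l != j ->
    mean (F r) (fun p => l \in p.1) = (rho r)%:R / N.-1%:R.
  move=> lj; rewrite (eq_mean_pred _ receiver_pairs_self).
  apply: mean_admissible_cond (fits r) psi_r_gt0 lj equivariant_snd equivariant_fst
    (@admissible_card_snd _ _ _) _ => p Ap.
  by rewrite (admissible_card_fst Ap) disjoint_sym (admissible_disjoint Ap).
have mean_j_has_l_wants_k l : l != j ->
    mean (F k) (fun q => (j \in q.1) * (l \in q.2))%N = (rho k * psi k)%:R / (N * N.-1)%:R.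
  move=> lj; rewrite (eq_mean_pred _ (receiver_pairsE kr)).
  apply: mean_admissible_mem2 (fits k) lj equivariant_fst equivariant_snd
    (@admissible_card_fst _ _ _) _ => p Ap.
  by rewrite (admissible_card_snd Ap) (admissible_disjoint Ap).
rewrite (mean_admissible_mem _ (fits k) equivariant_snd (@admissible_card_snd _ _ _)).
congr (_ + _).
rewrite (bigD1 j) //= (mean_family_mul (fun p : pairT N => j \in p.1)
  (fun q : pairT N => (j \in q.1) * (j \in q.2))%N rk card_receiver_pairs_gt0).
rewrite mean_j_has_r mul0r add0r.
under eq_bigr => l lj do
  rewrite (mean_family_mul (fun p : pairT N => l \in p.1)
             (fun q : pairT N => (j \in q.1) * (l \in q.2))%N rk card_receiver_pairs_gt0)
          (mean_l_has_r l lj) (mean_j_has_l_wants_k l lj).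
rewrite sumr_const cardC1 card_ord -mulr_natr !natrM.
have N_neq0 : N%:R != 0 :> rat by rewrite pnatr_eq0 -lt0n ltnW.
have N1_neq0 : N.-1%:R != 0 :> rat by rewrite pnatr_eq0 -lt0n -ltnS prednK // ltnW.
by field; rewrite N_neq0 N1_neq0.
Qed.

Lemma expected_degreeE :
  expected_degree rho psi r j =
    \sum_(k | k != r) ((psi k)%:R / N%:R + (rho r * rho k * psi k)%:R / (N * N.-1)%:R).
Proof.
rewrite expected_degree_mean.
under eq_mean_in => c /receiver_pairs_config [wants_lacks j_wanted].
  rewrite (primary_degreeE wants_lacks j_wanted).
  over.
by rewrite mean_sum; apply: eq_bigr => k; apply: mean_degree_term.
Qed.

End ExpectedDegree.

Theorem theorem2 (N M : nat) (rho psi : 'I_M -> nat) (i h : 'I_M) (j j' : 'I_N) :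
  2 <= N ->
  (forall k, rho k + psi k <= N) ->
  psi h < psi i -> 1 <= psi h -> rho i < rho h ->
  (expected_degree rho psi i j' < expected_degree rho psi h j)%R.
Proof.
move=> N_gt1 fits psi_hi psi_h_gt0 rho_ih.
have psi_i_gt0 : 0 < psi i by apply: leq_trans psi_hi.
have ih : i != h by apply: contraTneq psi_hi => ->; rewrite ltnn.
rewrite !expected_degreeE // (bigD1 h) 1?eq_sym // [X in (_ < X)%R](bigD1 i) //=.
set D := ((N * N.-1)%:R : rat).
have D_gt0 : (0 < D)%R by rewrite ltr0n muln_gt0 -subn1 subn_gt0 N_gt1 ltnW.
have N_gt0 : (0 < (N%:R : rat))%R by rewrite ltr0n ltnW.
apply: ltr_leD.
  apply: ltr_leD; first by rewrite ltr_pM2r ?invr_gt0 // ltr_nat.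
  by rewrite ler_wpM2r ?invr_ge0 ?ltW // ler_nat [rho i * _]mulnC leq_mul2l (ltnW psi_hi) orbT.
rewrite (eq_bigl (fun k => (k != h) && (k != i))) => [|k]; last by rewrite andbC.
apply: ler_sum => k _; rewrite lerD2l ler_wpM2r ?invr_ge0 ?ltW //.
by rewrite ler_nat -!mulnA leq_mul2r (ltnW rho_ih) orbT.
Qed.
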